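(* $$\sum_{n=1}^\infty \frac{H_n \binom{2n}{n}}{n\, 2^{2n}} = \frac{\pi^2}{3}.$$
   Context: $H_n=\sum_{k=1}^n \frac{1}{k}$ denotes the $n$-th harmonic number and $\binom{2n}{n}$ the central binomial coefficient. *)

From Stdlib Require Import Reals.
From Coquelicot Require Import Coquelicot.
Open Scope R_scope.

Fixpoint harmonic (n : nat) : R :=
  match n with
  | O => 0
  | S m => harmonic m + / INR (S m)
  end.

Definition central_binom (n : nat) : R := Binomial.C (2 * n) n.

(* the n-th term for n >= 1; index shifted so that term k corresponds to n = k+1 *)
Definition term (n : nat) : R :=
  harmonic n * central_binom n / (INR n * 2 ^ (2 * n)).

From Stdlib Require Import Reals Lra Lia Nsatz.
From Coquelicot Require Import Coquelicot.
Open Scope R_scope.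

(* Write w_n = binom(2n, n) / 4^n and H_n / n = sum_(j >= 1) 1 / (j (n + j)).  The
   series becomes the double series sum_(n, j >= 1) w_n / (j (n + j)) of nonnegative
   terms, which may be summed by columns instead.  The column sums
   sum_(n >= 0) w_n / (n + j) = B(j, 1/2) = 1 / (j w_j) telescope thanks to the
   recurrence (2n + 2) w_(n+1) = (2n + 1) w_n, so it remains to show
   sum_(j >= 1) (1 / (j w_j) - 1 / j) / j = PI^2 / 3.  With the Wallis-type integrals
   I_m = int_0^(PI/2) cos^m and J_m = int_0^(PI/2) (PI x - x^2) cos^m, integration by
   parts shows that the j-th term is 2 (tau_(j-1) - tau_j) for tau_k = J_(2k) / I_(2k);
   as tau_0 = PI^2 / 6 and 0 <= tau_k <= 1 / (k w_k) = O(k^(-1/2)), the sum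
   telescopes to PI^2 / 3. *)

Lemma is_series_is_lim_seq (a : nat -> R) (l : R) :
  is_series a l <-> is_lim_seq (sum_n a) l.
Proof. split; intros H; exact H. Qed.

Lemma sum_n_S (a : nat -> R) (n : nat) : sum_n a (S n) = sum_n a n + a (S n).
Proof. exact (sum_Sn a n). Qed.

Lemma is_series_ext_R (a b : nat -> R) (l : R) :
  (forall n, a n = b n) -> is_series a l -> is_series b l.
Proof. exact (is_series_ext a b l). Qed.

Lemma is_series_plus_R (a b : nat -> R) (la lb : R) :
  is_series a la -> is_series b lb -> is_series (fun n => a n + b n) (la + lb).
Proof. exact (is_series_plus a b la lb). Qed.

Lemma is_series_telescoping (f : nat -> R) (l : R) :
  is_lim_seq f l -> is_series (fun k => f k - f (S k)) (f O - l).
Proof.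
  intros Hf.
  assert (Hsum : forall n, sum_n (fun k => f k - f (S k)) n = f O - f (S n) :> R).
  { induction n as [|n IH]; [now rewrite sum_O | rewrite sum_n_S, IH; ring]. }
  apply is_series_is_lim_seq, (is_lim_seq_ext (fun n => f O - f (S n)));
    [now intros n; rewrite Hsum |].
  apply is_lim_seq_minus'; [apply is_lim_seq_const | now apply is_lim_seq_incr_1 in Hf].
Qed.

Lemma is_lim_seq_sum_n (u : nat -> nat -> R) (l : nat -> R) (N : nat) :
  (forall i, is_lim_seq (u i) (l i)) ->
  is_lim_seq (fun K => sum_n (fun i => u i K) N) (sum_n l N).
Proof.
  intros Hu. induction N as [|N IH].
  - apply (is_lim_seq_ext (u O)); [now intros K; rewrite sum_O | now rewrite sum_O].
  - rewrite sum_n_S.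
    apply (is_lim_seq_ext (fun K => sum_n (fun i => u i K) N + u (S N) K));
      [now intros K; rewrite sum_n_S|].
    now apply is_lim_seq_plus'.
Qed.

Lemma sum_n_le (a b : nat -> R) (N : nat) :
  (forall k, a k <= b k) -> sum_n a N <= sum_n b N.
Proof. intros H. now apply sum_n_m_le. Qed.

Lemma sum_n_le_series (a : nat -> R) (l : R) (N : nat) :
  (forall k, 0 <= a k) -> is_series a l -> sum_n a N <= l.
Proof.
  intros Ha Hl.
  assert (Hincr : forall M, sum_n a N <= sum_n a (N + M)).
  { induction M as [|M IH]; [rewrite Nat.add_0_r; lra|].
    rewrite Nat.add_succ_r, sum_n_S. specialize (Ha (S (N + M))). lra. }
  apply (is_lim_seq_le_loc (fun _ => sum_n a N) (sum_n a) (sum_n a N) l).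
  - exists N. intros M HM. replace M with (N + (M - N))%nat by lia. apply Hincr.
  - apply is_lim_seq_const.
  - now apply is_series_is_lim_seq.
Qed.

Lemma is_lim_seq_inv_INR : is_lim_seq (fun n => / INR n) 0.
Proof.
  apply (is_lim_seq_inv INR p_infty); [exact is_lim_seq_INR | discriminate].
Qed.

Lemma is_lim_seq_0_of_sqr (u : nat -> R) :
  (forall n, 0 <= u n) -> is_lim_seq (fun n => u n ^ 2) 0 -> is_lim_seq u 0.
Proof.
  intros Hu Hsq.
  apply (is_lim_seq_ext (fun n => sqrt (u n ^ 2))); [intros n; now apply sqrt_pow2|].
  rewrite <- sqrt_0. apply is_lim_seq_continuous; [apply continuity_pt_sqrt; lra | exact Hsq].
Qed.

Lemma is_series_nonneg (a : nat -> R) (l : R) :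
  (forall k, 0 <= a k) -> is_series a l -> 0 <= l.
Proof.
  intros Ha Hl. apply Rle_trans with (sum_n a O); [rewrite sum_O; apply Ha|].
  now apply sum_n_le_series.
Qed.

Lemma is_series_swap_nonneg (a : nat -> nat -> R) (r c : nat -> R) (l : R) :
  (forall n j, 0 <= a n j) ->
  (forall n, is_series (a n) (r n)) ->
  (forall j, is_series (fun n => a n j) (c j)) ->
  is_series c l -> is_series r l.
Proof.
  intros Ha Hr Hc Hl.
  set (P N K := sum_n (fun n => sum_n (a n) K) N).
  assert (HP_N : forall N, is_lim_seq (P N) (sum_n r N)).
  { intros N. apply (is_lim_seq_sum_n (fun n K => sum_n (a n) K)). exact Hr. }
  assert (HP_K : forall K, is_lim_seq (fun N => P N K) (sum_n c K)).
  { intros K. apply (is_lim_seq_ext (fun N => sum_n (fun j => sum_n (fun n => a n j) N) K)).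
    - intros N. unfold P. now rewrite sum_n_switch.
    - apply (is_lim_seq_sum_n (fun j N => sum_n (fun n => a n j) N)). exact Hc. }
  assert (Hr_le : forall N, sum_n r N <= l).
  { intros N. apply (is_lim_seq_le (P N) (sum_n c) (sum_n r N) l);
      [| apply HP_N | now apply is_series_is_lim_seq].
    intros K. unfold P. rewrite sum_n_switch. apply sum_n_le. intros j.
    now apply (sum_n_le_series (fun n => a n j)). }
  destruct (ex_finite_lim_seq_incr (sum_n r) l) as [l' Hl']; [|exact Hr_le|].
  { intros N. rewrite sum_n_S. assert (0 <= r (S N)) by
      (apply (is_series_nonneg (a (S N))); auto). lra. }
  assert (Hc_le : forall K, sum_n c K <= l').
  { intros K. apply (is_lim_seq_le (fun N => P N K) (sum_n r) (sum_n c K) l');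
      [|apply HP_K|exact Hl'].
    intros N. apply sum_n_le. intros n. now apply sum_n_le_series. }
  assert (Hle : Rbar_le l l').
  { apply (is_lim_seq_le (sum_n c) (fun _ => l')); [exact Hc_le | | apply is_lim_seq_const].
    now apply is_series_is_lim_seq. }
  assert (Hge : Rbar_le l' l).
  { apply (is_lim_seq_le (sum_n r) (fun _ => l));
      [exact Hr_le | exact Hl' | apply is_lim_seq_const]. }
  cbn in Hle, Hge.
  replace l with l' by lra. now apply is_series_is_lim_seq.
Qed.

Lemma is_series_harmonic_gap (m : nat) :
  is_series (fun j => / INR (S j) - / INR (S (j + m))) (harmonic m).
Proof.
  induction m as [|m IH].
  - apply (is_series_ext_R (fun j => (fun _ => 0) j - (fun _ => 0) (S j)));
      [intros j; rewrite Nat.add_0_r; ring|].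
    replace (harmonic 0) with (0 - 0) by (cbn; ring).
    apply is_series_telescoping, is_lim_seq_const.
  - assert (Htail : is_series (fun j => / INR (S (j + m)) - / INR (S (S j + m)))
                      (/ INR (S (0 + m)) - 0)).
    { apply (is_series_telescoping (fun j => / INR (S (j + m)))).
      apply (is_lim_seq_ext (fun n => / INR (n + S m))); [intros n; do 3 f_equal; lia|].
      apply -> (is_lim_seq_incr_n (fun n => / INR n) (S m) 0). exact is_lim_seq_inv_INR. }
    apply (is_series_ext_R (fun j => (/ INR (S j) - / INR (S (j + m)))
                                    + (/ INR (S (j + m)) - / INR (S (S j + m))))).
    { intros j. rewrite Nat.add_succ_r. cbn [Nat.add]. ring. }
    replace (harmonic (S m)) with (harmonic m + (/ INR (S (0 + m)) - 0)) by (cbn; ring).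
    now apply is_series_plus_R.
Qed.

Lemma is_series_harmonic_div (n : nat) : (0 < n)%nat ->
  is_series (fun j => / (INR (S j) * (INR n + INR (S j)))) (harmonic n / INR n).
Proof.
  intros Hn. assert (0 < INR n) by (apply lt_0_INR; exact Hn).
  apply (is_series_ext_R (fun j => (/ INR (S j) - / INR (S (j + n))) * / INR n)).
  { intros j. replace (S (j + n)) with (n + S j)%nat by lia.
    rewrite plus_INR. pose proof (lt_0_INR (S j) (Nat.lt_0_succ j)). field. lra. }
  apply is_series_scal_r, is_series_harmonic_gap.
Qed.

(** * The Wallis ratio and the Beta integral B(k, 1/2) *)

Definition wallis_ratio (n : nat) : R := central_binom n / 2 ^ (2 * n).

Lemma wallis_ratio_0 : wallis_ratio 0 = 1.
Proof. unfold wallis_ratio, central_binom, Binomial.C. cbn. field. Qed.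

Lemma wallis_ratio_S (n : nat) :
  wallis_ratio (S n) = wallis_ratio n * (2 * INR n + 1) / (2 * INR n + 2).
Proof.
  unfold wallis_ratio, central_binom, Binomial.C.
  replace (2 * S n - S n)%nat with (S n) by lia.
  replace (2 * n - n)%nat with n by lia.
  replace (2 * S n)%nat with (S (S (2 * n))) by lia.
  rewrite !fact_simpl, !mult_INR, !S_INR, mult_INR. cbn [pow INR].
  pose proof (INR_fact_neq_0 n). pose proof (INR_fact_neq_0 (2 * n)).
  pose proof (pos_INR n). assert (2 ^ (2 * n) <> 0) by (apply pow_nonzero; lra).
  field. repeat split; auto; lra.
Qed.

Lemma wallis_ratio_pos (n : nat) : 0 < wallis_ratio n.
Proof.
  induction n as [|n IH]; [rewrite wallis_ratio_0; lra|].
  rewrite wallis_ratio_S. pose proof (pos_INR n).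
  apply Rdiv_lt_0_compat; [apply Rmult_lt_0_compat|]; lra.
Qed.

Lemma wallis_ratio_sqr_le (n : nat) : (2 * INR n + 1) * wallis_ratio n ^ 2 <= 1.
Proof.
  induction n as [|n IH]; [rewrite wallis_ratio_0; cbn; lra|].
  rewrite wallis_ratio_S, S_INR. pose proof (pos_INR n). pose proof (wallis_ratio_pos n).
  set (x := INR n) in *. set (w := wallis_ratio n) in *.
  replace ((2 * (x + 1) + 1) * (w * (2 * x + 1) / (2 * x + 2)) ^ 2)
    with ((2 * x + 1) * w ^ 2 * ((2 * x + 1) * (2 * x + 3) / (2 * x + 2) ^ 2)) by (field; lra).
  assert (0 <= (2 * x + 1) * (2 * x + 3) / (2 * x + 2) ^ 2 <= 1).
  { split; [apply Rdiv_le_0_compat; nra|].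
    apply Rmult_le_reg_r with ((2 * x + 2) ^ 2); [nra|].
    unfold Rdiv. rewrite Rmult_assoc, Rinv_l; nra. }
  assert (0 <= (2 * x + 1) * w ^ 2) by nra.
  nra.
Qed.

Lemma wallis_ratio_sqr_ge (n : nat) : (0 < n)%nat -> 1 <= 4 * INR n * wallis_ratio n ^ 2.
Proof.
  intros Hn. induction Hn as [|n Hn IH].
  - rewrite wallis_ratio_S, wallis_ratio_0. cbn. lra.
  - rewrite wallis_ratio_S, S_INR. pose proof (wallis_ratio_pos n).
    assert (Hx : 1 <= INR n) by (apply (le_INR 1); exact Hn).
    set (x := INR n) in *. set (w := wallis_ratio n) in *.
    replace (4 * (x + 1) * (w * (2 * x + 1) / (2 * x + 2)) ^ 2)
      with (4 * x * w ^ 2 * ((x + 1) * (2 * x + 1) ^ 2 / (x * (2 * x + 2) ^ 2)))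
      by (field; lra).
    assert (1 <= (x + 1) * (2 * x + 1) ^ 2 / (x * (2 * x + 2) ^ 2)).
    { apply Rmult_le_reg_r with (x * (2 * x + 2) ^ 2); [nra|].
      unfold Rdiv. rewrite Rmult_assoc, Rinv_l; nra. }
    nra.
Qed.

Lemma is_lim_seq_wallis_ratio : is_lim_seq wallis_ratio 0.
Proof.
  apply is_lim_seq_0_of_sqr; [intros n; apply Rlt_le, wallis_ratio_pos|].
  apply (is_lim_seq_le_le (fun _ => 0) _ (fun n => / INR (S n))).
  - intros n. pose proof (wallis_ratio_sqr_le n). rewrite S_INR.
    pose proof (pos_INR n). pose proof (pow2_ge_0 (wallis_ratio n)). split; [lra|].
    apply Rmult_le_reg_l with (INR n + 1); [lra|]. rewrite Rinv_r; nra.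
  - apply is_lim_seq_const.
  - apply -> (is_lim_seq_incr_1 (fun n => / INR n) 0). exact is_lim_seq_inv_INR.
Qed.

(* [beta_half k] is the Beta integral B(k, 1/2) = int_0^1 x^(k-1) (1-x)^(-1/2) dx. *)
Definition beta_half (k : nat) : R := / (INR k * wallis_ratio k).

Lemma beta_half_S (k : nat) : (0 < k)%nat ->
  beta_half (S k) = beta_half k * (2 * INR k) / (2 * INR k + 1).
Proof.
  intros Hk. unfold beta_half. rewrite wallis_ratio_S, S_INR.
  pose proof (wallis_ratio_pos k). assert (1 <= INR k) by (apply (le_INR 1); exact Hk).
  field. repeat split; lra.
Qed.

Lemma is_series_wallis_ratio_div (k : nat) : (0 < k)%nat ->
  is_series (fun n => wallis_ratio n / (INR n + INR k)) (beta_half k).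
Proof.
  intros Hk. induction Hk as [|k Hk IH].
  - apply (is_series_ext_R (fun n => (wallis_ratio n - wallis_ratio (S n)) * 2)).
    { intros n. rewrite wallis_ratio_S. cbn [INR]. pose proof (pos_INR n). field. lra. }
    replace (beta_half 1) with ((wallis_ratio 0 - 0) * 2)
      by (unfold beta_half; rewrite wallis_ratio_S, wallis_ratio_0; cbn; field).
    apply is_series_scal_r, is_series_telescoping, is_lim_seq_wallis_ratio.
  - assert (Hx : 1 <= INR k) by (apply (le_INR 1); exact Hk).
    set (d n := 2 * INR n * wallis_ratio n / (INR n + INR k)).
    assert (Hd : is_lim_seq d 0).
    { apply (is_lim_seq_le_le (fun _ => 0) d (fun n => 2 * wallis_ratio n)).
      - intros n. pose proof (pos_INR n). pose proof (wallis_ratio_pos n). unfold d.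
        split; [apply Rdiv_le_0_compat; nra|].
        apply Rmult_le_reg_r with (INR n + INR k); [lra|].
        unfold Rdiv. rewrite Rmult_assoc, Rinv_l; nra.
      - apply is_lim_seq_const.
      - replace (Finite 0) with (Rbar_mult 2 0) by (cbn; f_equal; ring).
        apply is_lim_seq_scal_l, is_lim_seq_wallis_ratio. }
    (* (2k+1) w n / (n + k + 1) - 2k w n / (n + k) telescopes as d n - d (n + 1) *)
    apply (is_series_ext_R
             (fun n => (wallis_ratio n / (INR n + INR k) * (2 * INR k) + (d n - d (S n)))
                       * / (2 * INR k + 1))).
    { intros n. unfold d. rewrite wallis_ratio_S, !S_INR. pose proof (pos_INR n).
      field. repeat split; lra. }
    replace (beta_half (S k)) with ((beta_half k * (2 * INR k) + (d O - 0)) * / (2 * INR k + 1))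
      by (rewrite beta_half_S by exact Hk; unfold d; cbn [INR]; field; lra).
    apply is_series_scal_r, is_series_plus_R;
      [now apply is_series_scal_r | now apply is_series_telescoping].
Qed.

(** * Wallis integrals *)

Lemma continuous_of_ex_derive (f : R -> R) (x : R) : ex_derive f x -> continuous f x.
Proof. exact (ex_derive_continuous f x). Qed.

Lemma ex_RInt_of_ex_derive (f : R -> R) (a b : R) :
  (forall x, ex_derive f x) -> ex_RInt f a b.
Proof.
  intros Hf. apply (ex_RInt_continuous (V := R_CompleteNormedModule)).
  intros x _. apply continuous_of_ex_derive, Hf.
Qed.

Lemma RInt_is_derive (f df : R -> R) (a b : R) :
  (forall x, is_derive f x (df x)) -> (forall x, continuous df x) ->
  RInt df a b = f b - f a.
Proof.
  intros Hf Hdf. apply is_RInt_unique, (is_RInt_derive f df a b); auto.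
Qed.

Lemma RInt_lincomb2 (f g : R -> R) (a b p q : R) :
  ex_RInt f a b -> ex_RInt g a b ->
  RInt (fun x => p * f x - q * g x) a b = p * RInt f a b - q * RInt g a b.
Proof.
  intros Hf Hg. apply is_RInt_unique.
  exact (is_RInt_minus _ _ _ _ _ _ (is_RInt_scal _ _ _ p _ (RInt_correct _ _ _ Hf))
                                   (is_RInt_scal _ _ _ q _ (RInt_correct _ _ _ Hg))).
Qed.

Lemma RInt_lincomb3 (f g h : R -> R) (a b p q r : R) :
  ex_RInt f a b -> ex_RInt g a b -> ex_RInt h a b ->
  RInt (fun x => p * f x - q * g x - r * h x) a b
  = p * RInt f a b - q * RInt g a b - r * RInt h a b.
Proof.
  intros Hf Hg Hh. apply is_RInt_unique.
  exact (is_RInt_minus _ _ _ _ _ _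
           (is_RInt_minus _ _ _ _ _ _ (is_RInt_scal _ _ _ p _ (RInt_correct _ _ _ Hf))
                                      (is_RInt_scal _ _ _ q _ (RInt_correct _ _ _ Hg)))
           (is_RInt_scal _ _ _ r _ (RInt_correct _ _ _ Hh))).
Qed.

Definition wallis_integral (n : nat) : R := RInt (fun x => cos x ^ n) 0 (PI / 2).

Definition weighted_wallis_integral (n : nat) : R :=
  RInt (fun x => (PI * x - x ^ 2) * cos x ^ n) 0 (PI / 2).

Lemma wallis_integral_0 : wallis_integral 0 = PI / 2.
Proof.
  unfold wallis_integral. rewrite (RInt_is_derive (fun x => x)).
  - lra.
  - intros x. auto_derive; auto.
  - intros x. apply continuous_of_ex_derive. auto_derive. auto.
Qed.

Lemma weighted_wallis_integral_0 : weighted_wallis_integral 0 = PI ^ 3 / 12.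
Proof.
  unfold weighted_wallis_integral.
  rewrite (RInt_is_derive (fun x => PI * x ^ 2 / 2 - x ^ 3 / 3)).
  - field.
  - intros x. auto_derive; auto. field.
  - intros x. apply continuous_of_ex_derive. auto_derive. auto.
Qed.

(* [auto_derive] leaves [INR (S m)] unfolded in this form. *)
Lemma INR_S_match (m : nat) : match m with O => 1 | S _ => INR m + 1 end = INR m + 1.
Proof. destruct m; cbn; lra. Qed.

Lemma wallis_integral_rec (m : nat) :
  INR (m + 2) * wallis_integral (m + 2) = INR (m + 1) * wallis_integral m.
Proof.
  unfold wallis_integral. apply Rminus_diag_uniq.
  rewrite <- RInt_lincomb2 by (apply ex_RInt_of_ex_derive; intros; auto_derive; auto).
  (* integrate by parts against sin, using sin^2 = 1 - cos^2 *)
  rewrite (RInt_is_derive (fun x => cos x ^ S m * sin x)).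
  - rewrite cos_PI2, sin_0. cbn. ring.
  - intros x. auto_derive; auto.
    rewrite INR_S_match, !plus_INR, !pow_add. cbn.
    pose proof (sin2_cos2 x) as H. unfold Rsqr in H. nsatz.
  - intros x. apply continuous_of_ex_derive. auto_derive. auto.
Qed.

Lemma weighted_wallis_integral_rec (m : nat) :
  INR (m + 2) * weighted_wallis_integral (m + 2) - INR (m + 1) * weighted_wallis_integral m
  - 2 / INR (m + 2) * wallis_integral (m + 2) = - PI / INR (m + 2).
Proof.
  unfold weighted_wallis_integral, wallis_integral.
  rewrite <- RInt_lincomb3 by (apply ex_RInt_of_ex_derive; intros; auto_derive; auto).
  assert (Hm : INR (m + 2) <> 0) by (rewrite plus_INR; cbn; pose proof (pos_INR m); lra).
  rewrite (RInt_is_derive (fun x => (PI * x - x ^ 2) * cos x ^ S m * sin x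
                                    + (PI - 2 * x) * cos x ^ (m + 2) / INR (m + 2))).
  - rewrite cos_PI2, sin_0, cos_0, !pow1. cbn. field. exact Hm.
  - intros x. auto_derive; auto.
    replace (Init.Nat.pred (m + 2)) with (S m) by lia.
    rewrite INR_S_match, !plus_INR in *. rewrite !pow_add. cbn in *.
    pose proof (sin2_cos2 x) as H. unfold Rsqr in H.
    assert (Hr : / (INR m + (1 + 1)) * (INR m + (1 + 1)) = 1) by (field; exact Hm).
    unfold Rdiv. nsatz.
  - intros x. apply continuous_of_ex_derive. auto_derive. auto.
Qed.

Lemma wallis_integral_even (k : nat) : wallis_integral (2 * k) = PI / 2 * wallis_ratio k.
Proof.
  induction k as [|k IH]; [rewrite wallis_ratio_0, Nat.mul_0_r, wallis_integral_0; ring|].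
  pose proof (wallis_integral_rec (2 * k)) as Hrec.
  replace (INR (2 * k + 2)) with (2 * INR k + 2) in Hrec
    by (rewrite plus_INR, mult_INR; cbn; ring).
  replace (INR (2 * k + 1)) with (2 * INR k + 1) in Hrec
    by (rewrite plus_INR, mult_INR; cbn; ring).
  replace (2 * k + 2)%nat with (2 * S k)%nat in Hrec by lia.
  rewrite IH in Hrec. rewrite wallis_ratio_S. pose proof (pos_INR k).
  apply Rmult_eq_reg_l with (2 * INR k + 2); [|lra].
  rewrite Hrec. field. lra.
Qed.

Lemma weighted_wallis_integral_nonneg (n : nat) : 0 <= weighted_wallis_integral n.
Proof.
  unfold weighted_wallis_integral. pose proof PI_RGT_0.
  apply RInt_ge_0; [lra | apply ex_RInt_of_ex_derive; intros; auto_derive; auto|].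
  intros x Hx. apply Rmult_le_pos; [nra | apply pow_le, cos_ge_0; lra].
Qed.

Lemma x_cos_le_sin (x : R) : 0 <= x <= PI / 2 -> x * cos x <= sin x.
Proof.
  intros Hx. pose proof PI_RGT_0.
  assert (E : RInt (fun t => t * sin t) 0 x = sin x - x * cos x :> R).
  { rewrite (RInt_is_derive (fun t => sin t - t * cos t)).
    - rewrite sin_0. ring.
    - intros t. auto_derive; auto. ring.
    - intros t. apply continuous_of_ex_derive. auto_derive. auto. }
  assert (0 <= RInt (fun t => t * sin t) 0 x).
  { apply RInt_ge_0; [lra | apply ex_RInt_of_ex_derive; intros; auto_derive; auto|].
    intros t Ht. apply Rmult_le_pos; [lra | apply sin_ge_0; lra]. }
  lra.
Qed.

Lemma weighted_wallis_integral_le (m : nat) : weighted_wallis_integral (S m) <= PI / INR (S m).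
Proof.
  unfold weighted_wallis_integral. pose proof PI_RGT_0.
  assert (Hm : 0 < INR (S m)) by (apply lt_0_INR; lia).
  apply Rle_trans with (RInt (fun x => PI * (sin x * cos x ^ m)) 0 (PI / 2)).
  - apply RInt_le; [lra | apply ex_RInt_of_ex_derive; intros; auto_derive; auto
                        | apply ex_RInt_of_ex_derive; intros; auto_derive; auto|].
    intros x Hx. pose proof (x_cos_le_sin x ltac:(lra)).
    assert (0 <= cos x) by (apply cos_ge_0; lra).
    assert (0 <= cos x ^ m) by (apply pow_le; lra).
    assert (x * cos x * cos x ^ m <= sin x * cos x ^ m) by (apply Rmult_le_compat_r; lra).
    assert (0 <= x * x * (cos x * cos x ^ m)) by (apply Rmult_le_pos; nra).
    cbn [pow]. nra.
  - rewrite (RInt_is_derive (fun x => - PI * cos x ^ S m / INR (S m))).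
    + rewrite cos_PI2, cos_0, pow1, pow_i by lia. right. field. lra.
    + intros x. auto_derive; auto. rewrite INR_S_match, <- S_INR. field. lra.
    + intros x. apply continuous_of_ex_derive. auto_derive. auto.
Qed.

Definition wallis_quotient (k : nat) : R :=
  weighted_wallis_integral (2 * k) / wallis_integral (2 * k).

Lemma wallis_quotient_0 : wallis_quotient 0 = PI ^ 2 / 6.
Proof.
  unfold wallis_quotient. rewrite Nat.mul_0_r, weighted_wallis_integral_0, wallis_integral_0.
  pose proof PI_RGT_0. field. lra.
Qed.

Lemma wallis_quotient_step (k : nat) :
  wallis_quotient k - wallis_quotient (S k) = (beta_half (S k) - / INR (S k)) / (2 * INR (S k)).
Proof.
  pose proof (weighted_wallis_integral_rec (2 * k)) as Hrec.
  replace (INR (2 * k + 2)) with (2 * INR k + 2) in Hrec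
    by (rewrite plus_INR, mult_INR; cbn; ring).
  replace (INR (2 * k + 1)) with (2 * INR k + 1) in Hrec
    by (rewrite plus_INR, mult_INR; cbn; ring).
  replace (2 * k + 2)%nat with (2 * S k)%nat in Hrec by lia.
  unfold wallis_quotient, beta_half. rewrite !wallis_integral_even in *.
  rewrite !wallis_ratio_S in *. rewrite S_INR.
  pose proof (pos_INR k). pose proof (wallis_ratio_pos k). pose proof PI_RGT_0.
  set (w := wallis_ratio k) in *.
  set (J0 := weighted_wallis_integral (2 * k)) in *.
  set (J1 := weighted_wallis_integral (2 * S k)) in *.
  assert (HJ0 : J0 = ((2 * INR k + 2) * J1
                      - 2 / (2 * INR k + 2) * (PI / 2 * (w * (2 * INR k + 1) / (2 * INR k + 2)))
                      + PI / (2 * INR k + 2)) / (2 * INR k + 1)).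
  { apply Rmult_eq_reg_r with (2 * INR k + 1); [|lra].
    rewrite <- (Rmult_div_swap _ (2 * INR k + 1)), Rmult_div_l by lra. lra. }
  rewrite HJ0. field. repeat split; lra.
Qed.

Lemma wallis_quotient_nonneg (k : nat) : 0 <= wallis_quotient k.
Proof.
  unfold wallis_quotient. rewrite wallis_integral_even.
  pose proof (wallis_ratio_pos k). pose proof PI_RGT_0.
  apply Rdiv_le_0_compat; [apply weighted_wallis_integral_nonneg | nra].
Qed.

Lemma wallis_quotient_le_beta_half (k : nat) : wallis_quotient (S k) <= beta_half (S k).
Proof.
  unfold wallis_quotient, beta_half. rewrite wallis_integral_even.
  pose proof (weighted_wallis_integral_le (2 * k + 1)) as HJ.
  replace (S (2 * k + 1)) with (2 * S k)%nat in HJ by lia.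
  rewrite mult_INR in HJ. cbn [INR] in HJ.
  pose proof (wallis_ratio_pos (S k)). pose proof PI_RGT_0.
  assert (HS : 0 < INR (S k)) by (apply lt_0_INR; lia).
  apply Rmult_le_reg_r with (PI / 2 * wallis_ratio (S k)); [nra|].
  unfold Rdiv at 1. rewrite Rmult_assoc, Rinv_l, Rmult_1_r by nra.
  replace (/ (INR (S k) * wallis_ratio (S k)) * (PI / 2 * wallis_ratio (S k)))
    with (PI / ((1 + 1) * INR (S k))) by (field; lra).
  exact HJ.
Qed.

Lemma is_lim_seq_beta_half_S : is_lim_seq (fun k => beta_half (S k)) 0.
Proof.
  apply is_lim_seq_0_of_sqr.
  { intros k. unfold beta_half. pose proof (wallis_ratio_pos (S k)).
    pose proof (lt_0_INR (S k) (Nat.lt_0_succ k)).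
    apply Rlt_le, Rinv_0_lt_compat, Rmult_lt_0_compat; lra. }
  apply (is_lim_seq_le_le (fun _ => 0) _ (fun k => 4 * / INR (S k))).
  - intros k. pose proof (wallis_ratio_sqr_ge (S k) (Nat.lt_0_succ k)).
    pose proof (wallis_ratio_pos (S k)). pose proof (lt_0_INR (S k) (Nat.lt_0_succ k)).
    unfold beta_half. split; [apply pow2_ge_0|].
    apply Rmult_le_reg_r with (4 * INR (S k) * wallis_ratio (S k) ^ 2); [nra|].
    replace ((/ (INR (S k) * wallis_ratio (S k))) ^ 2
             * (4 * INR (S k) * wallis_ratio (S k) ^ 2))
      with (4 * / INR (S k)) by (field; lra).
    assert (0 < / INR (S k)) by (apply Rinv_0_lt_compat; lra). nra.
  - apply is_lim_seq_const.
  - replace (Finite 0) with (Rbar_mult 4 0) by (cbn; f_equal; ring).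
    apply is_lim_seq_scal_l.
    apply -> (is_lim_seq_incr_1 (fun n => / INR n) 0). exact is_lim_seq_inv_INR.
Qed.

Lemma is_lim_seq_wallis_quotient : is_lim_seq wallis_quotient 0.
Proof.
  apply is_lim_seq_incr_1.
  apply (is_lim_seq_le_le (fun _ => 0) _ (fun k => beta_half (S k))).
  - intros k. split; [apply wallis_quotient_nonneg | apply wallis_quotient_le_beta_half].
  - apply is_lim_seq_const.
  - exact is_lim_seq_beta_half_S.
Qed.

Lemma is_series_beta_half_defect :
  is_series (fun j => (beta_half (S j) - / INR (S j)) / INR (S j)) (PI ^ 2 / 3).
Proof.
  apply (is_series_ext_R (fun j => (wallis_quotient j - wallis_quotient (S j)) * 2)).
  { intros j. rewrite wallis_quotient_step.
    pose proof (lt_0_INR (S j) (Nat.lt_0_succ j)). field. lra. }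
  replace (PI ^ 2 / 3) with ((wallis_quotient 0 - 0) * 2) by (rewrite wallis_quotient_0; field).
  apply is_series_scal_r, is_series_telescoping, is_lim_seq_wallis_quotient.
Qed.

(** * Summation by columns *)

Definition double_term (n j : nat) : R :=
  wallis_ratio (S n) / (INR (S j) * (INR (S n) + INR (S j))).

Lemma double_term_nonneg (n j : nat) : 0 <= double_term n j.
Proof.
  unfold double_term. pose proof (wallis_ratio_pos (S n)).
  pose proof (lt_0_INR (S n) (Nat.lt_0_succ n)). pose proof (lt_0_INR (S j) (Nat.lt_0_succ j)).
  apply Rdiv_le_0_compat; nra.
Qed.

Lemma is_series_double_term_row (n : nat) : is_series (double_term n) (term (S n)).
Proof.
  apply (is_series_ext_R (fun j => / (INR (S j) * (INR (S n) + INR (S j))) * wallis_ratio (S n))).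
  { intros j. unfold double_term. field.
    pose proof (pos_INR n). pose proof (pos_INR j). rewrite !S_INR. split; lra. }
  replace (term (S n)) with (harmonic (S n) / INR (S n) * wallis_ratio (S n)).
  - apply is_series_scal_r, is_series_harmonic_div, Nat.lt_0_succ.
  - unfold term, wallis_ratio. pose proof (lt_0_INR (S n) (Nat.lt_0_succ n)).
    assert (2 ^ (2 * S n) <> 0) by (apply pow_nonzero; lra). field. lra.
Qed.

Lemma is_series_double_term_col (j : nat) :
  is_series (fun n => double_term n j) ((beta_half (S j) - / INR (S j)) / INR (S j)).
Proof.
  pose proof (lt_0_INR (S j) (Nat.lt_0_succ j)).
  apply (is_series_ext_R (fun n => wallis_ratio (S n) / (INR (S n) + INR (S j)) * / INR (S j))).
  { intros n. unfold double_term. pose proof (pos_INR (S n)). field. lra. }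
  pose proof (is_series_wallis_ratio_div (S j) (Nat.lt_0_succ j)) as Hfull.
  replace (beta_half (S j))
    with ((beta_half (S j) - / INR (S j)) + wallis_ratio 0 / (INR 0 + INR (S j))) in Hfull
    by (rewrite wallis_ratio_0, INR_0; field; lra).
  apply is_series_scal_r, (is_series_incr_1 (fun n => wallis_ratio n / (INR n + INR (S j)))).
  exact Hfull.
Qed.

Theorem mainTheorem1 :
  is_series (fun k : nat => term (S k)) (PI ^ 2 / 3).
Proof.
  apply (is_series_swap_nonneg double_term _ _ _ double_term_nonneg
           is_series_double_term_row is_series_double_term_col is_series_beta_half_defect).
Qed.
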